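(* Let $(M,\mathcal F,\mathcal J)$ be a generalized almost para-Hermitian manifold with associated triple $(\gamma,\psi,F)$ and let $\iota:N\hookrightarrow M$ be a submanifold. Then $N$ is a regular invariant submanifold if and only if the subspaces $\overleftarrow{\iota}^*\mathbf H_+,\overleftarrow{\iota}^*\mathbf H_-,\overleftarrow{\iota}^*\overline{\mathbf H}_+,\overleftarrow{\iota}^*\overline{\mathbf H}_-$ give a decomposition $$\mathbf T^cN=\overleftarrow{\iota}^*\mathbf H_+\oplus\overleftarrow{\iota}^*\mathbf H_-\oplus\overleftarrow{\iota}^*\overline{\mathbf H}_+\oplus\overleftarrow{\iota}^*\overline{\mathbf H}_-$$ which defines a generalized almost para-Hermitian structure on $N$ (i.e. $\overleftarrow{\iota}^*\mathbf H_\pm\oplus\overleftarrow{\iota}^*\overline{\mathbf H}_\pm$ are the $\pm1$-eigenbundles of a generalized almost paracomplex structure $\mathcal F_N$ and $\overleftarrow{\iota}^*\mathbf H_+\oplus\overleftarrow{\iota}^*\overline{\mathbf H}_-$ is the $i$-eigenbundle of a generalized almost complex structure $\mathcal J_N$, with $(\mathcal F_N,\mathcal J_N)$ generalized almost para-Hermitian). In this case the structure so defined is the one whose associated triple is $(\iota^*\gamma,\iota^*\psi,F|_{T^cN})$.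
   Context: $\mathbf TM=TM\oplus T^*M$ with pairing $g((X,\alpha),(Y,\beta))=\frac12(\alpha(Y)+\beta(X))$; superscript $c$ = complexification, bar = conjugation. A generalized almost para-Hermitian structure is a commuting pair $(\mathcal F,\mathcal J)$ with $\mathcal F^2=\mathrm{Id}$, $\mathcal J^2=-\mathrm{Id}$, both $g$-skew, and non-degenerate symmetric bivector $\gamma(\alpha,\beta)=-2g(\mathcal F(0,\alpha),\mathcal J(0,\beta))$. $\mathbf F_\pm$ are the $\pm1$-eigenbundles of $\mathcal F$, $\mathcal H=\mathcal F\mathcal J$, $\mathbf H$ its $i$-eigenbundle and $\mathbf H_\pm=\mathbf F_\pm\cap\mathbf H$. Associated triple: $\gamma$ also denotes the inverse pseudo-Riemannian metric on $TM$; with $\mathcal H(X,0)=(QX,\ast)$, $\psi(X,Y)=-\gamma(QX,Y)$; $\mathbf H=\tau(T^cM)$, $\tau(X)=(X,\psi(X,\cdot)+i\gamma(X,\cdot))$; $FX=\mathrm{pr}_{T^cM}\mathcal F(\tau X)$ (so $F^2=\mathrm{Id}$, $\gamma(FX,Y)=-\gamma(X,FY)$); every such triple determines a unique structure. A submanifold $N$ is regular invariant if $\iota^*\gamma$ is non-degenerate and $T^cN$ is $F$-invariant. Pullback: for $U\subseteq\mathbf T^c_xM$, $\overleftarrow{\iota}^*U=\{(X,\iota^*\eta):X\in T^c_xN,\ (\iota_*X,\eta)\in U\}\subseteq\mathbf T^c_xN$. *)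

(* Pointwise (fibrewise) linear-algebra model of the
   generalized almost para-Hermitian setting. *)
From HB Require Import structures.
From mathcomp Require Import all_boot all_order all_algebra.
Set Implicit Arguments. Unset Strict Implicit. Unset Printing Implicit Defensive.
Import Order.TTheory GRing.Theory Num.Theory.
Local Open Scope ring_scope.

(* Conventions: C is the complexification field (any numClosedFieldType,
   real elements = Num.real, conjugation = Num.conj).  T^c_xM = C^n (row
   vectors), T^*c_xM = C^n via the dual basis, and TT^c_xM = C^(n+n), an
   element (X, alpha) being the row vector row_mx X alpha.  An endomorphism A
   acts on row vectors by u |-> u *m A. *)

Section Defs.
Variable C : numClosedFieldType.

(* 2 g(u,v) = u *m pairG *m v^T *)
Definition pairG n : 'M[C]_(n + n) := block_mx 0 1%:M 1%:M 0.

(* g-skew: g(uA, v) = - g(u, vA) *)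
Definition gskew n (A : 'M[C]_(n + n)) : Prop := A *m pairG n = - (pairG n *m A^T).

Definition E1 n : 'M[C]_(n, n + n) := row_mx 1%:M 0.
Definition E2 n : 'M[C]_(n, n + n) := row_mx 0 1%:M.

(* the bivector gamma(a,b) = -2 g(F(0,a), J(0,b)) = a *m gammaB *m b^T *)
Definition gammaB n (F J : 'M[C]_(n + n)) : 'M[C]_n :=
  - (E2 n *m F *m pairG n *m (E2 n *m J)^T).

Definition gen_para_herm n (F J : 'M[C]_(n + n)) : Prop :=
  [/\ F \is a realmx, J \is a realmx, F *m F = 1%:M & J *m J = - 1%:M] /\
  [/\ gskew F, gskew J, F *m J = J *m F,
       (gammaB F J)^T = gammaB F J & gammaB F J \in unitmx].

(* gamma as pseudo-Riemannian metric on TM: gamma(X,Y) = X *m gammaM *m Y^T *)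
Definition gammaM n (F J : 'M[C]_(n + n)) : 'M[C]_n := invmx (gammaB F J).
(* H = F o J acts by u |-> u *m (J *m F); Q = first component of H(X,0) *)
Definition Qmx n (F J : 'M[C]_(n + n)) : 'M[C]_n := E1 n *m (J *m F) *m (E1 n)^T.
(* psi(X,Y) = - gamma(QX, Y) = X *m psiM *m Y^T *)
Definition psiM n (F J : 'M[C]_(n + n)) : 'M[C]_n := - (Qmx F J *m gammaM F J).
(* tau(X) = (X, psi(X,.) + i gamma(X,.)) *)
Definition tauM n (F J : 'M[C]_(n + n)) : 'M[C]_(n, n + n) :=
  row_mx 1%:M (psiM F J + 'i *: gammaM F J).
(* F X = pr_{T^cM} F(tau X) *)
Definition Fmx n (F J : 'M[C]_(n + n)) : 'M[C]_n := tauM F J *m F *m (E1 n)^T.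

Definition Hplus n (F J : 'M[C]_(n + n)) :=
  (eigenspace F 1 :&: eigenspace (J *m F) 'i)%MS.
Definition Hminus n (F J : 'M[C]_(n + n)) :=
  (eigenspace F (-1) :&: eigenspace (J *m F) 'i)%MS.
Definition cconjmx m n (A : 'M[C]_(m, n)) := map_mx (@Num.conj C) A.

(* submanifold at a point: iota_* given by X |-> X *m I, I : 'M_(k, m);
   pullback iota^* eta = eta *m I^T. *)
Definition Lmat k m (I : 'M[C]_(k, m)) : 'M[C]_(k + m, m + m) :=
  block_mx I 0 0 1%:M.                      (* (X,eta) |-> (iota_* X, eta) *)
Definition Pmat k m (I : 'M[C]_(k, m)) : 'M[C]_(k + m, k + k) :=
  block_mx 1%:M 0 0 I^T.                    (* (X,eta) |-> (X, iota^* eta) *)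
(* pullback of U: { (X, iota^* eta) : (iota_* X, eta) in U } *)
Definition pullback k m (I : 'M[C]_(k, m)) r (U : 'M[C]_(r, m + m)) :
  'M[C]_(k + m, k + k) :=
  kermx (Lmat I *m cokermx U) *m Pmat I.

(* regular invariant submanifold: iota^* gamma non-degenerate and
   T^cN (row space of I) invariant under F *)
Definition regular_invariant m k (F J : 'M[C]_(m + m)) (I : 'M[C]_(k, m)) : Prop :=
  I *m gammaM F J *m I^T \in unitmx /\ (I *m Fmx F J <= I)%MS.

End Defs.

(* Conjugating by the frame P = [[1, ψ + iγ], [1, ψ - iγ]] turns H = JF into
   diag(i, -i) and F into diag(F, conj F), where (γ, ψ, F) is the associated
   triple.  Indeed P = [[1, i], [1, -i]] [[1, ψ], [0, γ]], and H^2 = -1 together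
   with the g-symmetry of H make the shear [[1, ψ], [0, γ]] conjugate H to the
   standard complex structure [[0, -1], [1, 0]]; F commutes with H, and reality
   pairs its two diagonal blocks.  Hence H_± = {(X, X(ψ + iγ)) : XF = ±X}, conj H_±
   is the graph of ψ - iγ over the eigenspaces of conj F, and conversely every
   admissible triple defines a structure by the same formula.  Pulling back such a
   graph along ι gives the graph of ι^*ψ ± i ι^*γ over the preimage of the
   eigenspace.  If N is regular invariant these are exactly the eigenbundles of
   the structure of (ι^*γ, ι^*ψ, F|_N), and a dimension count makes their sum
   direct.  Conversely, if the four pullbacks span T^cN, the difference of the
   two graphs shows that ι^*γ is non-degenerate and decomposing
   (X, X ι^*(ψ + iγ)) shows that T^cN is F-invariant.  Uniqueness: an involution
   is determined by its ±1-eigenspaces, a real complex structure by its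
   i-eigenspace. *)

From HB Require Import structures.
From mathcomp Require Import all_boot all_order all_algebra.
From mathcomp Require Import ring zify.
Set Implicit Arguments. Unset Strict Implicit. Unset Printing Implicit Defensive.
Import Order.TTheory GRing.Theory Num.Theory.
Local Open Scope ring_scope.

Section ComplexConjugation.
Variable C : numClosedFieldType.

Lemma cconjmxK m n (A : 'M[C]_(m, n)) : cconjmx (cconjmx A) = A.
Proof. by apply/matrixP => i j; rewrite !mxE conjCK. Qed.

Lemma cconjmxM m n p (A : 'M[C]_(m, n)) (B : 'M_(n, p)) :
  cconjmx (A *m B) = cconjmx A *m cconjmx B.
Proof. exact: map_mxM. Qed.

Lemma cconjmxD m n (A B : 'M[C]_(m, n)) : cconjmx (A + B) = cconjmx A + cconjmx B.
Proof. exact: map_mxD. Qed.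

Lemma cconjmxN m n (A : 'M[C]_(m, n)) : cconjmx (- A) = - cconjmx A.
Proof. exact: map_mxN. Qed.

Lemma cconjmxZ m n c (A : 'M[C]_(m, n)) : cconjmx (c *: A) = c^* *: cconjmx A.
Proof. exact: map_mxZ. Qed.

Lemma cconjmx_tr m n (A : 'M[C]_(m, n)) : cconjmx A^T = (cconjmx A)^T.
Proof. by rewrite /cconjmx map_trmx. Qed.

Lemma cconjmx_scalar n c : cconjmx (c%:M : 'M[C]_n) = c^*%:M.
Proof. exact: map_scalar_mx. Qed.

Lemma cconjmx_inv n (A : 'M[C]_n) : cconjmx (invmx A) = invmx (cconjmx A).
Proof. exact: map_invmx. Qed.

Lemma cconjmx_block m1 m2 n1 n2 (A : 'M[C]_(m1, n1)) (B : 'M_(m1, n2))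
    (D : 'M_(m2, n1)) (E : 'M_(m2, n2)) :
  cconjmx (block_mx A B D E) = block_mx (cconjmx A) (cconjmx B) (cconjmx D) (cconjmx E).
Proof. exact: map_block_mx. Qed.

Lemma cconjmx_row m n1 n2 (A : 'M[C]_(m, n1)) (B : 'M_(m, n2)) :
  cconjmx (row_mx A B) = row_mx (cconjmx A) (cconjmx B).
Proof. exact: map_row_mx. Qed.

Lemma submx_cconj m1 m2 n (A : 'M[C]_(m1, n)) (B : 'M_(m2, n)) :
  (cconjmx A <= cconjmx B)%MS = (A <= B)%MS.
Proof. exact: map_submx. Qed.

Lemma realmxP m n (A : 'M[C]_(m, n)) : reflect (cconjmx A = A) (A \is a realmx).
Proof.
apply: (iffP idP) => [/realmxC //|cA]; apply/mxOverP => i j.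
by apply/CrealP; rewrite -{2}cA mxE.
Qed.

Lemma i2_neq0 : ('i *+ 2 : C) != 0.
Proof. by rewrite mulrn_eq0 negb_or neq0Ci. Qed.

Lemma scaleNi_eq0 m n (A : 'M[C]_(m, n)) : - 'i *: A = 'i *: A -> A = 0.
Proof.
move/eqP; rewrite scaleNr eq_sym -subr_eq0 opprK -scalerDl scaler_eq0.
by rewrite -mulr2n (negPf i2_neq0) => /eqP.
Qed.

End ComplexConjugation.

Section Blocks.
Variables (C : numClosedFieldType) (n : nat).
Local Notation pG := (pairG C n).
Local Notation E1 := (E1 C n).
Local Notation E2 := (E2 C n).

Lemma mulE1_block m (A B : 'M[C]_(n, m)) D E : E1 *m block_mx A B D E = row_mx A B.
Proof. by rewrite /E1 mul_row_block !mul1mx !mul0mx !addr0. Qed.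

Lemma mulE2_block m (A B : 'M[C]_(n, m)) D E : E2 *m block_mx D E A B = row_mx A B.
Proof. by rewrite /E2 mul_row_block !mul1mx !mul0mx !add0r. Qed.

Lemma mul_row_trE1 m (A B : 'M[C]_(m, n)) : row_mx A B *m E1^T = A.
Proof. by rewrite /E1 tr_row_mx mul_row_col trmx1 trmx0 mulmx1 mulmx0 addr0. Qed.

Lemma mul_row_trE2 m (A B : 'M[C]_(m, n)) : row_mx A B *m E2^T = B.
Proof. by rewrite /E2 tr_row_mx mul_row_col trmx1 trmx0 mulmx1 mulmx0 add0r. Qed.

Lemma mul_row_pairG m (A B : 'M[C]_(m, n)) : row_mx A B *m pG = row_mx B A.
Proof. by rewrite /pairG mul_row_block !mulmx0 !mulmx1 add0r addr0. Qed.

Lemma mul_block_pairG (A B D E : 'M[C]_n) : block_mx A B D E *m pG = block_mx B A E D.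
Proof. by rewrite /pairG mulmx_block !mulmx0 !mulmx1 !add0r !addr0. Qed.

Lemma mul_pairG_block (A B D E : 'M[C]_n) : pG *m block_mx A B D E = block_mx D E A B.
Proof. by rewrite /pairG mulmx_block !mul0mx !mul1mx !add0r !addr0. Qed.

Lemma pairGK : pG *m pG = 1%:M.
Proof. by rewrite {2}/pairG mul_pairG_block -scalar_mx_block. Qed.

Lemma mul_E1_trE1 (X : 'M[C]_(n + n)) : E1 *m X *m E1^T = ulsubmx X.
Proof. by rewrite -[X]submxK mulE1_block mul_row_trE1 block_mxKul. Qed.

Lemma mul_E2_pairG_trE2 (X : 'M[C]_(n + n)) : E2 *m X *m pG *m E2^T = dlsubmx X.
Proof. by rewrite -[X]submxK mulE2_block mul_row_pairG mul_row_trE2 block_mxKdl. Qed.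

Lemma gammaB_dlsubmx (F J : 'M[C]_(n + n)) : gskew F ->
  J *m F *m pG = pG *m (J *m F)^T -> gammaB F J = dlsubmx (J *m F).
Proof.
move=> Fs Hs; have e : F *m pG *m J^T = - (J *m F *m pG).
  by rewrite Fs mulNmx -(mulmxA pG) -trmx_mul -Hs.
rewrite /gammaB trmx_mul.
have -> : E2 *m F *m pG *m (J^T *m E2^T) = E2 *m (F *m pG *m J^T) *m E2^T by rewrite !mulmxA.
by rewrite e mulmxN mulNmx opprK mulmxA mul_E2_pairG_trE2.
Qed.

Definition diag2 (d1 d2 : 'M[C]_n) : 'M_(n + n) := block_mx d1 0 0 d2.

Lemma mul_diag2 d1 d2 e1 e2 : diag2 d1 d2 *m diag2 e1 e2 = diag2 (d1 *m e1) (d2 *m e2).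
Proof. by rewrite /diag2 mulmx_block !mulmx0 !mul0mx !addr0 !add0r. Qed.

Lemma mul_row_diag2 m (x y : 'M[C]_(m, n)) d1 d2 :
  row_mx x y *m diag2 d1 d2 = row_mx (x *m d1) (y *m d2).
Proof. by rewrite /diag2 mul_row_block !mulmx0 addr0 add0r. Qed.

Lemma pairG_diag2 d1 d2 : pG *m diag2 d1 d2 *m pG = diag2 d2 d1.
Proof. by rewrite /diag2 mul_pairG_block mul_block_pairG. Qed.

Lemma diag2_scalar (c : C) : diag2 c%:M c%:M = c%:M.
Proof. by rewrite /diag2 -scalar_mx_block. Qed.

Lemma tr_diag2 d1 d2 : (diag2 d1 d2)^T = diag2 d1^T d2^T.
Proof. by rewrite /diag2 tr_block_mx !trmx0. Qed.

Lemma cconjmx_diag2 d1 d2 : cconjmx (diag2 d1 d2) = diag2 (cconjmx d1) (cconjmx d2).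
Proof. by rewrite /diag2 cconjmx_block /cconjmx !map_mx0. Qed.

End Blocks.

Section Similarity.
Variables (C : numClosedFieldType) (N : nat).
Implicit Types (P A B D G : 'M[C]_N).

Definition simmx P A := invmx P *m A *m P.

Lemma simmxM P A B : P \in unitmx -> simmx P A *m simmx P B = simmx P (A *m B).
Proof. by move=> PU; rewrite /simmx !mulmxA mulmxK. Qed.

Lemma mul_simmx P A : P \in unitmx -> P *m simmx P A = A *m P.
Proof. by move=> PU; rewrite /simmx !mulmxA mulmxV // mul1mx. Qed.

Lemma simmxK P : P \in unitmx -> cancel (simmx (invmx P)) (simmx P).
Proof. by move=> PU A; rewrite /simmx invmxK !mulmxA mulVmx // mul1mx mulmxKV. Qed.

Lemma simmxKV P : P \in unitmx -> cancel (simmx P) (simmx (invmx P)).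
Proof. by move=> PU A; rewrite /simmx invmxK !mulmxA mulmxV // mul1mx mulmxK. Qed.

Lemma simmx_inj P : P \in unitmx -> injective (simmx P).
Proof. by move=> PU; apply: can_inj (simmxKV PU). Qed.

Lemma simmx_scalar P (c : C) : P \in unitmx -> simmx P c%:M = c%:M.
Proof. by move=> PU; rewrite /simmx mul_mx_scalar -scalemxAl mulVmx // -mul_scalar_mx mulmx1. Qed.

Lemma simmx_formE P D G (s : C) : P \in unitmx ->
  (simmx P D *m G = s *: (G *m (simmx P D)^T)) <->
  (D *m (P *m G *m P^T) = s *: (P *m G *m P^T *m D^T)).
Proof.
move=> PU; have PTU : P^T \in unitmx by rewrite unitmx_tr.
have PX := mul_simmx D PU.
have <- : P *m (simmx P D *m G) *m P^T = D *m (P *m G *m P^T).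
  by rewrite (mulmxA P) PX !mulmxA.
have <- : P *m (G *m (simmx P D)^T) *m P^T = P *m G *m P^T *m D^T.
  by rewrite -mulmxA -(mulmxA G) -trmx_mul PX trmx_mul !mulmxA.
have scaleE Y : s *: (P *m Y *m P^T) = P *m (s *: Y) *m P^T.
  by rewrite scalemxAl scalemxAr.
rewrite scaleE; split=> [-> //|].
have congrK M : invmx P *m (P *m M *m P^T) *m invmx P^T = M.
  by rewrite -mulmxA mulmxK // mulKmx.
by move=> h; rewrite -[LHS]congrK h congrK.
Qed.

End Similarity.

Section SimilarDiagonal.
Variables (C : numClosedFieldType) (n : nat).

Lemma simmx_eigenspace (P : 'M[C]_(n + n)) d1 d2 (l : C) (v : 'rV_(n + n)) :
  P \in unitmx ->
  (v <= eigenspace (simmx P (diag2 d1 d2)) l)%MS <->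
  exists x y, [/\ x *m d1 = l *: x, y *m d2 = l *: y & v = row_mx x y *m P].
Proof.
move=> PU; split.
  move/eigenspaceP => hv.
  have hw : v *m invmx P *m diag2 d1 d2 = l *: (v *m invmx P).
    by rewrite scalemxAl -hv /simmx !mulmxA mulmxK.
  set x := lsubmx (v *m invmx P); set y := rsubmx (v *m invmx P).
  have wE : v *m invmx P = row_mx x y by rewrite hsubmxK.
  move: hw; rewrite wE mul_row_diag2 scale_row_mx; case/eq_row_mx => hx hy.
  by exists x, y; split => //; rewrite -wE mulmxKV.
case=> x [y [hx hy ->]]; apply/eigenspaceP.
by rewrite /simmx !mulmxA mulmxK // mul_row_diag2 hx hy -scale_row_mx scalemxAl.
Qed.

End SimilarDiagonal.

Section Frame.
Variables (C : numClosedFieldType) (n : nat).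
Implicit Types (a g : 'M[C]_n).
Local Notation pG := (pairG C n).

Definition zplus a g := a + 'i *: g.
Definition zminus a g := a - 'i *: g.

(* For a = ψ, g = γ, the top rows (X, X(ψ + iγ)) of [Hframe a g] span H and its
   bottom rows span conj H. *)
Definition Hframe a g : 'M[C]_(n + n) := block_mx 1%:M (zplus a g) 1%:M (zminus a g).
Definition shearmx a g : 'M[C]_(n + n) := block_mx 1%:M a 0 g.
Definition stdJ : 'M[C]_(n + n) := block_mx 0 (- 1%:M) 1%:M 0.
Definition diag_i : 'M[C]_(n + n) := diag2 ('i%:M) ((- 'i)%:M).

Lemma Hframe_shear a g : Hframe 0 1%:M *m shearmx a g = Hframe a g.
Proof.
rewrite /Hframe /shearmx /zplus /zminus mulmx_block !mulmx0 !mul1mx !addr0 !add0r.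
by rewrite !mulNmx -!scalemxAl !mul1mx.
Qed.

Lemma Hframe_unit a g : g \in unitmx -> Hframe a g \in unitmx.
Proof.
move=> gU; pose L : 'M[C]_(n + n) := block_mx 1%:M 0 (- 1%:M) 1%:M.
have LP : L *m Hframe a g = block_mx 1%:M (zplus a g) 0 (- ('i *+ 2) *: g).
  rewrite /L /Hframe mulmx_block !mul1mx !mul0mx ?add0r ?addr0 !mulNmx !mul1mx addNr.
  congr block_mx; apply/matrixP => i j; rewrite /zplus /zminus !mxE; ring.
have := congr1 determinant LP; rewrite det_mulmx det_lblock det_ublock !det1 !mul1r.
rewrite detZ unitmxE unitfE => ->; rewrite mulf_neq0 ?expf_neq0 -?unitfE -?unitmxE //.
by rewrite unitfE oppr_eq0 i2_neq0.
Qed.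

Lemma Hframe_stdJ : Hframe 0 1%:M *m stdJ = diag_i *m Hframe 0 1%:M.
Proof.
rewrite /Hframe /stdJ /diag_i /diag2 /zplus /zminus !mulmx_block.
rewrite !mulmx0 !mul0mx !mulmx1 !addr0 !add0r !mul_scalar_mx !scalemx1.
by congr block_mx; rewrite ?scale1r ?scalerN ?scale_scalar_mx ?mulNr ?mulCii ?opprK ?raddfN.
Qed.

Lemma cconjmx_Hframe a g : cconjmx a = a -> cconjmx g = g ->
  cconjmx (Hframe a g) = pG *m Hframe a g.
Proof.
move=> ar gr; rewrite /Hframe cconjmx_block cconjmx_scalar conjC1 mul_pairG_block.
by rewrite /zplus /zminus !cconjmxD cconjmxN !cconjmxZ ar gr conjCi scaleNr opprK.
Qed.

Lemma cconjmx_invHframe a g : cconjmx a = a -> cconjmx g = g -> g \in unitmx ->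
  cconjmx (invmx (Hframe a g)) = invmx (Hframe a g) *m pG.
Proof.
move=> ar gr gU; have PU := Hframe_unit a gU.
have e : pG *m Hframe a g *m (invmx (Hframe a g) *m pG) = 1%:M.
  by rewrite mulmxA mulmxK // pairGK.
rewrite cconjmx_inv cconjmx_Hframe //.
by rewrite -[RHS]mul1mx -(mulVmx (proj1 (mulmx1_unit e))) -mulmxA e mulmx1.
Qed.

Lemma cconjmx_simmx_Hframe a g D : cconjmx a = a -> cconjmx g = g -> g \in unitmx ->
  cconjmx (simmx (Hframe a g) D) = simmx (Hframe a g) (pG *m cconjmx D *m pG).
Proof.
move=> ar gr gU; rewrite /simmx !cconjmxM cconjmx_invHframe // cconjmx_Hframe //.
by rewrite !mulmxA.
Qed.

Lemma cconjmx_simmx_invHframe a g X : cconjmx a = a -> cconjmx g = g -> g \in unitmx ->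
  cconjmx (simmx (invmx (Hframe a g)) X) = pG *m simmx (invmx (Hframe a g)) (cconjmx X) *m pG.
Proof.
move=> ar gr gU; rewrite /simmx invmxK !cconjmxM cconjmx_Hframe //.
by rewrite cconjmx_invHframe // !mulmxA.
Qed.

Lemma Hframe_pairG a g : a^T = - a -> g^T = g ->
  Hframe a g *m pG *m (Hframe a g)^T = diag2 (('i *+ 2) *: g) (- (('i *+ 2) *: g)).
Proof.
move=> aT gT; rewrite /Hframe /diag2 mul_block_pairG tr_block_mx trmx1 mulmx_block.
rewrite !mulmx1 !mul1mx /zplus /zminus !raddfD /= !raddfN /= !linearZ /= aT gT.
by congr block_mx; apply/matrixP => i j; rewrite !mxE; ring.
Qed.

Lemma shearmx_simmx_diag_i a g : g \in unitmx ->
  shearmx a g *m simmx (Hframe a g) diag_i = stdJ *m shearmx a g.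
Proof.
move=> gU; have UU : Hframe 0 1%:M \in unitmx by apply/Hframe_unit/unitmx1.
apply: (can_inj (mulKmx UU)); rewrite /= mulmxA Hframe_shear mul_simmx ?Hframe_unit //.
by rewrite mulmxA Hframe_stdJ -mulmxA Hframe_shear.
Qed.

Lemma simmx_diag_i_blocks a g : g \in unitmx ->
  dlsubmx (simmx (Hframe a g) diag_i) = invmx g /\
  ulsubmx (simmx (Hframe a g) diag_i) = - (a *m invmx g).
Proof.
move=> gU; have := shearmx_simmx_diag_i a gU; set X := simmx _ _.
rewrite -{1}[X]submxK /shearmx /stdJ !mulmx_block !mul1mx !mul0mx ?mulmx0 ?mulmx1.
rewrite !add0r !addr0 => /eq_block_mx [e1 _ e3 _].
have X3 : dlsubmx X = invmx g by rewrite -[dlsubmx X](mulKmx gU) e3 mulmx1.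
by split=> //; apply/eqP; rewrite -addr_eq0 -X3 e1.
Qed.

End Frame.

Section Triples.
Variables (C : numClosedFieldType) (n : nat).
Implicit Types (a g f : 'M[C]_n).

(* The conditions on an associated triple (γ, ψ, F), passed as (a, g, f) =
   (ψ, γ, F) as in [Hframe]; F is not real in general. *)
Definition para_triple a g f : Prop :=
  [/\ a \is a realmx, a^T = - a, g \is a realmx, g^T = g & g \in unitmx] /\
  f *m f = 1%:M /\ f *m g = - (g *m f^T).

Definition triple_F a g f := simmx (Hframe a g) (diag2 f (cconjmx f)).
Definition triple_H a g := simmx (Hframe a g) (diag_i C n).
Definition triple_J a g f := triple_F a g f *m triple_H a g.

End Triples.

Section NormalForm.
Variables (C : numClosedFieldType) (n : nat) (F J : 'M[C]_(n + n)).
Hypothesis FJ_para : gen_para_herm F J.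

Local Notation pG := (pairG C n).
Local Notation H := (J *m F).

Let Freal : cconjmx F = F. Proof. by case: FJ_para => [[/realmxP]]. Qed.
Let Jreal : cconjmx J = J. Proof. by case: FJ_para => [[_ /realmxP]]. Qed.
Let FF : F *m F = 1%:M. Proof. by case: FJ_para => [[]]. Qed.
Let JJ : J *m J = - 1%:M. Proof. by case: FJ_para => [[]]. Qed.
Let Fskew : F *m pG = - (pG *m F^T). Proof. by case: FJ_para => [_ []]. Qed.
Let Jskew : J *m pG = - (pG *m J^T). Proof. by case: FJ_para => [_ []]. Qed.
Let FJC : F *m J = J *m F. Proof. by case: FJ_para => [_ []]. Qed.

Let HH : H *m H = - 1%:M.
Proof. by rewrite -mulmxA (mulmxA F) FJC !mulmxA JJ mulNmx mul1mx mulNmx FF. Qed.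

Let Hsym : H *m pG = pG *m H^T.
Proof.
by rewrite -mulmxA Fskew mulmxN mulmxA Jskew mulNmx opprK -mulmxA -trmx_mul FJC.
Qed.

Let Q := ulsubmx H.
Let S := ursubmx H.
Let G := dlsubmx H.
Let R := drsubmx H.

Let gammaB_G : gammaB F J = G.
Proof. by apply: gammaB_dlsubmx. Qed.
Let G_unit : G \in unitmx. Proof. by rewrite -gammaB_G; case: FJ_para => [_ []]. Qed.
Let G_sym : G^T = G. Proof. by rewrite -gammaB_G; case: FJ_para => [_ []]. Qed.

Let H_blocks : [/\ Q *m Q + S *m G = - 1%:M, R *m G = - (G *m Q) & Q = R^T].
Proof.
have := HH; rewrite -[H]submxK mulmx_block scalar_mx_block opp_block_mx oppr0.
case/eq_block_mx => e1 _ e3 _.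
have := Hsym; rewrite -[H]submxK mul_block_pairG tr_block_mx mul_pairG_block.
case/eq_block_mx => _ eT _ _; split=> //.
by apply/eqP; rewrite -addr_eq0 addrC e3.
Qed.

Let g := gammaM F J.
Let a := psiM F J.

Let gE : g = invmx G. Proof. by rewrite /g /gammaM gammaB_G. Qed.
Let aE : a = - (Q *m g). Proof. by rewrite /a /psiM /Qmx mul_E1_trE1. Qed.
Let g_unit : g \in unitmx. Proof. by rewrite gE unitmx_inv. Qed.

Let gR : g *m R = a.
Proof.
have [_ RG _] := H_blocks.
have RE : R = - (G *m Q) *m g by rewrite -RG gE mulmxK.
by rewrite RE mulNmx mulmxN !mulmxA gE mulVmx // mul1mx aE gE.
Qed.

Let shear_H : shearmx a g *m H = stdJ C n *m shearmx a g.
Proof.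
have [QQ _ _] := H_blocks.
have r1 : Q + a *m G = 0 by rewrite aE mulNmx -mulmxA gE mulVmx // mulmx1 subrr.
have Sg : S = (- 1%:M - Q *m Q) *m g by rewrite -QQ addrAC subrr add0r gE mulmxK.
have aR : a *m R = Q *m Q *m g.
  by rewrite {1}aE mulNmx -(mulmxA Q g R) gR aE mulmxN opprK mulmxA.
have r2 : S + a *m R = - g by rewrite Sg aR mulmxBl mulNmx mul1mx subrK.
rewrite -[H]submxK -/Q -/S -/G -/R /shearmx /stdJ !mulmx_block.
rewrite !mul1mx !mul0mx !mulmx0 ?add0r ?addr0.
by rewrite r1 r2 gR gE mulVmx // mulNmx mul1mx.
Qed.

Let P := Hframe a g.
Let P_unit : P \in unitmx. Proof. exact: Hframe_unit. Qed.

Let PH : P *m H = diag_i C n *m P.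
Proof.
by rewrite /P -Hframe_shear -mulmxA shear_H mulmxA Hframe_stdJ -mulmxA Hframe_shear.
Qed.

Lemma para_herm_JF : J *m F = triple_H a g.
Proof. by rewrite /triple_H /simmx -/P -mulmxA -PH mulKmx. Qed.

Let H_real : cconjmx H = H. Proof. by rewrite cconjmxM Jreal Freal. Qed.

Let QG_real : cconjmx Q = Q /\ cconjmx G = G.
Proof. by have := H_real; rewrite -[H]submxK cconjmx_block => /eq_block_mx [-> _ -> _]. Qed.

Let g_real : cconjmx g = g. Proof. by rewrite gE cconjmx_inv (proj2 QG_real). Qed.
Let a_real : cconjmx a = a. Proof. by rewrite aE cconjmxN cconjmxM g_real (proj1 QG_real). Qed.
Let g_sym : g^T = g. Proof. by rewrite gE trmx_inv G_sym. Qed.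
Let a_skew : a^T = - a.
Proof. by have [_ _ QR] := H_blocks; rewrite {1}aE raddfN /= trmx_mul g_sym QR trmxK gR. Qed.

Let F' := simmx (invmx P) F.

Let F_simF' : F = simmx P F'. Proof. by rewrite simmxK. Qed.

Let F'_diag_i : F' *m diag_i C n = diag_i C n *m F'.
Proof.
have DiE : diag_i C n = simmx (invmx P) H by rewrite /simmx invmxK PH mulmxK.
have FH : F *m H = H *m F by rewrite mulmxA FJC.
by rewrite DiE !simmxM ?unitmx_inv // FH.
Qed.

Let F'_diag : F' = diag2 (ulsubmx F') (drsubmx F').
Proof.
move: F'_diag_i; rewrite -[F']submxK /diag_i /diag2 block_mxKul block_mxKdr.
rewrite !mulmx_block ?mulmx0 ?mul0mx ?addr0 ?add0r !mul_mx_scalar !mul_scalar_mx.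
case/eq_block_mx => _ e2 e3 _.
by rewrite (scaleNi_eq0 e2) (scaleNi_eq0 (esym e3)).
Qed.

Let F'_ul : ulsubmx F' = Fmx F J.
Proof.
have tauE : tauM F J = E1 C n *m P by rewrite /P /Hframe mulE1_block.
rewrite /Fmx tauE -(mulmxA _ P) F_simF' mul_simmx // F'_diag /diag2 mulmxA mulE1_block.
by rewrite /P /Hframe mul_row_block mul_row_trE1 mulmx1 mul0mx addr0 block_mxKul.
Qed.

Let F'_dr : drsubmx F' = cconjmx (ulsubmx F').
Proof.
have := cconjmx_simmx_invHframe F a_real g_real g_unit; rewrite Freal -/P -/F'.
rewrite [X in cconjmx X = _]F'_diag [X in _ *m X *m _]F'_diag cconjmx_diag2 pairG_diag2.
by case/eq_block_mx => ->.
Qed.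

Lemma para_herm_F : F = triple_F a g (Fmx F J).
Proof. by rewrite {1}F_simF' F'_diag F'_dr F'_ul. Qed.

Lemma para_herm_triple : para_triple a g (Fmx F J).
Proof.
split; first by split=> //; apply/realmxP.
have FE : F = simmx P (diag2 (Fmx F J) (cconjmx (Fmx F J))) := para_herm_F.
set f := Fmx F J in FE *; set D := diag2 f (cconjmx f) in FE.
split.
  have : simmx P (D *m D) = simmx P 1%:M by rewrite -simmxM // -FE FF simmx_scalar.
  by move/(simmx_inj P_unit); rewrite mul_diag2 -diag2_scalar => /eq_block_mx [].
have : F *m pG = -1 *: (pG *m F^T) by rewrite scaleN1r.
rewrite FE => /(simmx_formE _ _ _ P_unit); rewrite Hframe_pairG // tr_diag2 !mul_diag2.
rewrite /diag2 scale_block_mx => /eq_block_mx [e _ _ _].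
by apply: (scalerI (i2_neq0 C)); rewrite scalemxAr e scaleN1r -scalemxAl scalerN.
Qed.

End NormalForm.

Section TripleStructure.
Variables (C : numClosedFieldType) (n : nat) (a g f : 'M[C]_n).
Hypothesis agf : para_triple a g f.

Local Notation pG := (pairG C n).
Local Notation P := (Hframe a g).
Local Notation FT := (triple_F a g f).
Local Notation HT := (triple_H a g).
Local Notation JT := (triple_J a g f).

Let a_real : cconjmx a = a. Proof. by case: agf => [[/realmxP]]. Qed.
Let a_skew : a^T = - a. Proof. by case: agf => [[]]. Qed.
Let g_real : cconjmx g = g. Proof. by case: agf => [[_ _ /realmxP]]. Qed.
Let g_sym : g^T = g. Proof. by case: agf => [[]]. Qed.
Let g_unit : g \in unitmx. Proof. by case: agf => [[]]. Qed.
Let ff : f *m f = 1%:M. Proof. by case: agf => [_ []]. Qed.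
Let fg : f *m g = - (g *m f^T). Proof. by case: agf => [_ []]. Qed.
Let P_unit : P \in unitmx. Proof. exact: Hframe_unit. Qed.

Let FT_real : cconjmx FT = FT.
Proof. by rewrite cconjmx_simmx_Hframe // cconjmx_diag2 cconjmxK pairG_diag2. Qed.

Let HT_real : cconjmx HT = HT.
Proof.
rewrite cconjmx_simmx_Hframe // /diag_i cconjmx_diag2 pairG_diag2 !cconjmx_scalar.
by rewrite rmorphN /= conjCi opprK.
Qed.

Let FTFT : FT *m FT = 1%:M.
Proof.
by rewrite simmxM // mul_diag2 ff -cconjmxM ff cconjmx_scalar conjC1 diag2_scalar simmx_scalar.
Qed.

Let HTHT : HT *m HT = - 1%:M.
Proof.
rewrite simmxM // /diag_i mul_diag2 -!scalar_mxM mulrNN mulCii diag2_scalar.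
by rewrite simmx_scalar // raddfN.
Qed.

Let FTHT : FT *m HT = HT *m FT.
Proof. by rewrite !simmxM // /diag_i !mul_diag2 !(scalar_mxC _ f) !(scalar_mxC _ (cconjmx f)). Qed.

Let JTFT : JT *m FT = HT.
Proof. by rewrite /triple_J -mulmxA -FTHT mulmxA FTFT mul1mx. Qed.

Let FT_skew : FT *m pG = - (pG *m FT^T).
Proof.
rewrite -scaleN1r; apply/simmx_formE => //.
rewrite Hframe_pairG // tr_diag2 !mul_diag2 /diag2 scale_block_mx !scaler0 !scaleN1r.
have fg' : cconjmx f *m g = - (g *m (cconjmx f)^T).
  by rewrite -g_real -cconjmxM fg cconjmxN cconjmxM cconjmx_tr g_real.
congr block_mx.
- by rewrite -scalemxAr fg -scalemxAl scalerN.
- by rewrite mulmxN mulNmx -scalemxAr -scalemxAl fg' scalerN opprK.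
Qed.

Let HT_sym : HT *m pG = pG *m HT^T.
Proof.
rewrite -[pG *m HT^T]scale1r; apply/simmx_formE => //.
rewrite Hframe_pairG // /diag_i tr_diag2 !mul_diag2 scale1r !tr_scalar_mx.
by rewrite !mul_mx_scalar !mul_scalar_mx.
Qed.

Let JT_skew : JT *m pG = - (pG *m JT^T).
Proof.
by rewrite /triple_J -mulmxA HT_sym mulmxA FT_skew mulNmx -mulmxA -trmx_mul FTHT.
Qed.

Let gammaB_T : gammaB FT JT = invmx g.
Proof.
rewrite gammaB_dlsubmx //; last by rewrite JTFT.
by rewrite JTFT; case: (simmx_diag_i_blocks a g_unit).
Qed.

Lemma triple_para_herm : gen_para_herm FT JT.
Proof.
split; split; rewrite ?gammaB_T ?trmx_inv ?g_sym ?unitmx_inv //; try exact/realmxP.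
- by apply/realmxP; rewrite /triple_J cconjmxM FT_real HT_real.
- by rewrite /triple_J -mulmxA (mulmxA HT) -FTHT -mulmxA HTHT mulmxA mulmxN mulmx1 FTFT.
- by rewrite /triple_J mulmxA FTFT mul1mx JTFT.
Qed.

Lemma gammaM_triple : gammaM FT JT = g.
Proof. by rewrite /gammaM gammaB_T invmxK. Qed.

Lemma psiM_triple : psiM FT JT = a.
Proof.
rewrite /psiM /Qmx gammaM_triple mul_E1_trE1 JTFT.
by case: (simmx_diag_i_blocks a g_unit) => _ ->; rewrite mulNmx opprK mulmxKV.
Qed.

Lemma Fmx_triple : Fmx FT JT = f.
Proof.
have tauE : tauM FT JT = E1 C n *m P by rewrite /tauM psiM_triple gammaM_triple mulE1_block.
rewrite /Fmx tauE -(mulmxA (E1 C n) P) mul_simmx // mulmxA mulE1_block mul_row_block.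
by rewrite !mulmx1 !mul0mx addr0 mul_row_trE1.
Qed.

Lemma eigenspace_triple_F (l : C) (v : 'rV_(n + n)) :
  (v <= eigenspace FT l)%MS <->
  exists x y, [/\ x *m f = l *: x, y *m cconjmx f = l *: y & v = row_mx x y *m P].
Proof. exact: simmx_eigenspace. Qed.

Lemma eigenspace_triple_J (v : 'rV_(n + n)) :
  (v <= eigenspace JT 'i)%MS <->
  exists x y, [/\ x *m f = x, y *m cconjmx f = - y & v = row_mx x y *m P].
Proof.
rewrite /triple_J simmxM // /diag_i mul_diag2 simmx_eigenspace //.
rewrite !mul_mx_scalar.
split; case=> x [y [hx hy ->]]; exists x, y; split => //.
- by apply: (scalerI (neq0Ci C)); rewrite scalemxAr hx.
- have Ni_neq0 : - 'i != 0 :> C by rewrite oppr_eq0 neq0Ci.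
  by apply: (scalerI Ni_neq0); rewrite scalemxAr hy scalerN scaleNr opprK.
- by rewrite -scalemxAr hx.
- by rewrite -scalemxAr hy scalerN scaleNr opprK.
Qed.

End TripleStructure.

Section Eigenbundles.
Variables (C : numClosedFieldType) (n : nat) (F J : 'M[C]_(n + n)).
Hypothesis FJ_para : gen_para_herm F J.

Local Notation a := (psiM F J).
Local Notation g := (gammaM F J).
Local Notation f := (Fmx F J).

Let P_unit : Hframe a g \in unitmx.
Proof. by have [[_ _ _ _ gU] _] := para_herm_triple FJ_para; apply: Hframe_unit. Qed.

Let graph_Hframe (x : 'rV_n) : row_mx x (x *m zplus a g) = row_mx x 0 *m Hframe a g.
Proof. by rewrite /Hframe mul_row_block !mul0mx !addr0 mulmx1. Qed.

Lemma sub_eigenspace_FH (l : C) (u : 'rV_(n + n)) :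
  (u <= eigenspace F l :&: eigenspace (J *m F) 'i)%MS <->
  exists x, x *m f = l *: x /\ u = row_mx x (x *m zplus a g).
Proof.
have -> : eigenspace F l = eigenspace (triple_F a g f) l by rewrite -para_herm_F.
rewrite para_herm_JF // sub_capmx; split.
  case/andP => /(simmx_eigenspace _ _ _ _ P_unit) [x [y [hx _ hu]]].
  move=> /(simmx_eigenspace _ _ _ _ P_unit) [x' [y' [_ hy' hu']]].
  have y'0 : y' = 0 by apply: scaleNi_eq0; rewrite -hy' mul_mx_scalar.
  have /eq_row_mx [ex ey] : row_mx x y = row_mx x' y'.
    by apply: (can_inj (mulmxK P_unit)); rewrite /= -hu.
  by exists x; rewrite graph_Hframe hu ey y'0.
case=> x [hx ->]; rewrite graph_Hframe; apply/andP; split.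
  by apply/simmx_eigenspace => //; exists x, 0; rewrite mul0mx scaler0.
apply/simmx_eigenspace => //; exists x, 0.
by rewrite mul_mx_scalar mul0mx scaler0.
Qed.

Lemma sub_cconj_eigenspace_FH (l : C) (u : 'rV_(n + n)) : l^* = l ->
  (u <= cconjmx (eigenspace F l :&: eigenspace (J *m F) 'i))%MS <->
  exists x, x *m cconjmx f = l *: x /\ u = row_mx x (x *m zminus a g).
Proof.
have [[/realmxP ar _ /realmxP gr _ _] _] := para_herm_triple FJ_para.
have zE : cconjmx (zplus a g) = zminus a g.
  by rewrite /zplus /zminus cconjmxD cconjmxZ ar gr conjCi scaleNr.
move=> lr; rewrite -[u in (u <= _)%MS]cconjmxK submx_cconj sub_eigenspace_FH; split.
  case=> x [hx hu]; exists (cconjmx x); split; first by rewrite -cconjmxM hx cconjmxZ lr.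
  by rewrite -[u]cconjmxK hu cconjmx_row cconjmxM zE.
case=> x [hx ->]; exists (cconjmx x); split.
  by rewrite -[f]cconjmxK -cconjmxM hx cconjmxZ lr.
by rewrite cconjmx_row cconjmxM -zE cconjmxK.
Qed.

End Eigenbundles.

Section Pullback.
Variables (C : numClosedFieldType) (k m : nat) (I : 'M[C]_(k, m)).

Lemma sub_pullbackP r (U : 'M_(r, m + m)) (v : 'rV_(k + k)) :
  (v <= pullback I U)%MS <->
  exists (X : 'rV_k) (e : 'rV_m), (row_mx (X *m I) e <= U)%MS /\ v = row_mx X (e *m I^T).
Proof.
have LE (w : 'rV_(k + m)) : w *m Lmat I = row_mx (lsubmx w *m I) (rsubmx w).
  by rewrite -{1}[w]hsubmxK /Lmat mul_row_block !mulmx0 addr0 add0r mulmx1.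
have PE (w : 'rV_(k + m)) : w *m Pmat I = row_mx (lsubmx w) (rsubmx w *m I^T).
  by rewrite -{1}[w]hsubmxK /Pmat mul_row_block !mulmx0 addr0 add0r mulmx1.
rewrite /pullback; split.
  case/submxP => D ->; pose w := D *m kermx (Lmat I *m cokermx U).
  have /sub_kermxP : (w <= kermx (Lmat I *m cokermx U))%MS by exact: submxMl.
  rewrite (mulmxA w) => /eqP; rewrite -submxE LE => wU.
  by exists (lsubmx w), (rsubmx w); rewrite mulmxA -/w PE.
case=> X [e [XU ->]]; have := PE (row_mx X e); rewrite row_mxKl row_mxKr => <-.
apply: submxMr; apply/sub_kermxP; rewrite mulmxA; apply/eqP; rewrite -submxE.
by rewrite LE row_mxKl row_mxKr.
Qed.

Lemma sub_pullback_graph r (U : 'M_(r, m + m)) (h Z : 'M_m) (l : C) :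
  (forall u : 'rV_(m + m), (u <= U)%MS <-> exists x, x *m h = l *: x /\ u = row_mx x (x *m Z)) ->
  forall v, (v <= pullback I U)%MS <->
    exists X : 'rV_k, X *m I *m h = l *: (X *m I) /\ v = row_mx X (X *m (I *m Z *m I^T)).
Proof.
move=> hU v; rewrite sub_pullbackP; split.
  case=> X [e [/hU [x [hx /eq_row_mx [ex ee]]] ->]].
  by exists X; rewrite ee !mulmxA ex hx.
case=> X [hX ->]; exists X, (X *m I *m Z); split; last by rewrite !mulmxA.
by apply/hU; exists (X *m I).
Qed.

End Pullback.

Section RowSpaces.
Variables (C : numClosedFieldType) (k : nat).

Lemma sub_addsmx_rowP m1 m2 (U : 'M[C]_(m1, k)) (V : 'M_(m2, k)) (v : 'rV_k) :
  (v <= U + V)%MS <-> exists v1 v2, [/\ (v1 <= U)%MS, (v2 <= V)%MS & v = v1 + v2].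
Proof.
split; first by case/sub_addsmxP => u ->; exists (u.1 *m U), (u.2 *m V); rewrite !submxMl.
by case=> v1 [v2 [h1 h2 ->]]; rewrite addmx_sub_adds.
Qed.

Lemma eqmx_row_subP m1 m2 (U : 'M[C]_(m1, k)) (V : 'M_(m2, k)) :
  (forall v : 'rV_k, (v <= U)%MS <-> (v <= V)%MS) -> (U == V)%MS.
Proof. by move=> UV; apply/andP; split; apply/row_subP => i; apply/UV; apply: row_sub. Qed.

Lemma rank_graph_le r (U : 'M[C]_(r, k + k)) (h Z : 'M[C]_k) (l : C) :
  (forall v : 'rV_(k + k), (v <= U)%MS -> exists X, X *m h = l *: X /\ v = row_mx X (X *m Z)) ->
  (\rank U <= \rank (eigenspace h l))%N.
Proof.
move=> hU; have sub : (U <= eigenspace h l *m row_mx 1%:M Z)%MS.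
  apply/row_subP => i; case: (hU _ (row_sub i U)) => X [hX ->].
  have -> : row_mx X (X *m Z) = X *m row_mx 1%:M Z by rewrite mul_mx_row mulmx1.
  by apply: submxMr; apply/eigenspaceP.
exact: leq_trans (mxrankS sub) (mxrankM_maxl _ _).
Qed.

End RowSpaces.

Section Involutions.
Variables (C : numClosedFieldType) (k : nat).
Implicit Types (A B : 'M[C]_k).

Let half_add (v : 'rV[C]_k) : 2^-1 *: (v + v) = v.
Proof. by rewrite -mulr2n -scaler_nat scalerA mulVf ?scale1r // pnatr_eq0. Qed.

Lemma sub_eigenspace_pm1 A (v : 'rV_k) : A *m A = 1%:M ->
  (v <= eigenspace A 1 + eigenspace A (-1))%MS.
Proof.
move=> AA; apply/sub_addsmx_rowP.
exists (2^-1 *: (v + v *m A)), (2^-1 *: (v - v *m A)); split.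
- apply/eigenspaceP; rewrite scale1r -scalemxAl mulmxDl -mulmxA AA mulmx1 addrC //.
- apply/eigenspaceP; rewrite -scalemxAl mulmxBl -mulmxA AA mulmx1.
  by rewrite scaleN1r -scalerN opprB.
- by rewrite -scalerDr addrACA subrr addr0 half_add.
Qed.

Lemma sub_eigenspace_pmi A (v : 'rV_k) : A *m A = - 1%:M ->
  (v <= eigenspace A 'i + eigenspace A (- 'i))%MS.
Proof.
move=> AA; apply/sub_addsmx_rowP.
exists (2^-1 *: (v - 'i *: (v *m A))), (2^-1 *: (v + 'i *: (v *m A))); split.
- apply/eigenspaceP; rewrite -scalemxAl mulmxBl -scalemxAl -mulmxA AA mulmxN mulmx1.
  rewrite [in RHS]scalerA [in RHS]mulrC -[in RHS]scalerA; congr (_ *: _).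
  by rewrite scalerBr scalerA mulCii scaleN1r opprK scalerN opprK addrC.
- apply/eigenspaceP; rewrite -scalemxAl mulmxDl -scalemxAl -mulmxA AA mulmxN mulmx1.
  rewrite [in RHS]scalerA [in RHS]mulrC -[in RHS]scalerA; congr (_ *: _).
  by rewrite scalerDr scalerA mulNr mulCii opprK scale1r scalerN scaleNr addrC.
- by rewrite -scalerDr addrACA addNr addr0 half_add.
Qed.

Lemma invol_eq_eigenspace A B : A *m A = 1%:M ->
  (eigenspace A 1 <= eigenspace B 1)%MS -> (eigenspace A (-1) <= eigenspace B (-1))%MS ->
  A = B.
Proof.
move=> AA s1 s2; apply/eqP/mulmxP => v.
case/sub_addsmx_rowP: (sub_eigenspace_pm1 v AA) => v1 [v2 [h1 h2 ->]].
move/eigenspaceP: (submx_trans h1 s1) => e1'; move/eigenspaceP: (submx_trans h2 s2) => e2'.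
by move/eigenspaceP: h1 => e1; move/eigenspaceP: h2 => e2; rewrite !mulmxDl e1 e2 e1' e2'.
Qed.

(* Reality makes the -i-eigenspace the conjugate of the i-eigenspace. *)
Lemma cpx_eq_eigenspace A B : A *m A = - 1%:M -> A \is a realmx -> B \is a realmx ->
  (eigenspace A 'i <= eigenspace B 'i)%MS -> A = B.
Proof.
move=> AA /realmxP Ar /realmxP Br s1; apply/eqP/mulmxP => v.
case/sub_addsmx_rowP: (sub_eigenspace_pmi v AA) => v1 [v2 [h1 h2 ->]].
move/eigenspaceP: (submx_trans h1 s1) => e1'; move/eigenspaceP: (h1) => e1.
move/eigenspaceP: (h2) => e2.
have e2' : v2 *m B = - 'i *: v2.
  have c2 : (cconjmx v2 <= eigenspace A 'i)%MS.
    have conjNi : (- 'i)^* = 'i :> C by rewrite -(conjCi C) conjCK.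
    by apply/eigenspaceP; rewrite -Ar -cconjmxM e2 cconjmxZ conjNi.
  move/eigenspaceP: (submx_trans c2 s1) => e.
  by rewrite -[v2]cconjmxK -Br -cconjmxM e cconjmxZ conjCi.
by rewrite !mulmxDl e1 e2 e1' e2'.
Qed.

Lemma rank_eigenspace_pm1 A : (\rank (eigenspace A 1) + \rank (eigenspace A (-1)) <= k)%N.
Proof.
rewrite -mxrank_sum_cap.
suff -> : \rank (eigenspace A 1 :&: eigenspace A (-1))%MS = 0%N by rewrite addn0 rank_leq_col.
apply/eqP; rewrite mxrank_eq0 -submx0; apply/row_subP => i; set w := row i _.
have /andP [/eigenspaceP e1 /eigenspaceP e2] :
  (w <= eigenspace A 1)%MS && (w <= eigenspace A (-1))%MS by rewrite -sub_capmx row_sub.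
have ww : w + w = 0 by rewrite -{1}[w]scale1r -e1 e2 scaleN1r addNr.
by rewrite submx0 -[w]half_add ww scaler0.
Qed.

End Involutions.

Section Submanifold.
Variables (C : numClosedFieldType) (m k : nat) (F J : 'M[C]_(m + m)) (I : 'M[C]_(k, m)).
Hypotheses (FJ_para : gen_para_herm F J) (I_real : I \is a realmx) (I_free : row_free I).

Local Notation g := (gammaM F J).
Local Notation a := (psiM F J).
Local Notation f := (Fmx F J).
Local Notation gN := (I *m g *m I^T).
Local Notation aN := (I *m a *m I^T).
Local Notation Ap := (pullback I (Hplus F J)).
Local Notation Am := (pullback I (Hminus F J)).
Local Notation Bp := (pullback I (cconjmx (Hplus F J))).
Local Notation Bm := (pullback I (cconjmx (Hminus F J))).

Let sub_pullback_H (l : C) (v : 'rV_(k + k)) :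
  (v <= pullback I (eigenspace F l :&: eigenspace (J *m F) 'i))%MS <->
  exists X : 'rV_k, X *m I *m f = l *: (X *m I) /\ v = row_mx X (X *m zplus aN gN).
Proof.
have -> : zplus aN gN = I *m zplus a g *m I^T.
  by rewrite /zplus mulmxDr mulmxDl -scalemxAr -scalemxAl.
by apply: sub_pullback_graph => u; apply: sub_eigenspace_FH.
Qed.

Let sub_pullback_cH (l : C) (v : 'rV_(k + k)) : l^* = l ->
  (v <= pullback I (cconjmx (eigenspace F l :&: eigenspace (J *m F) 'i)))%MS <->
  exists X : 'rV_k, X *m I *m cconjmx f = l *: (X *m I) /\ v = row_mx X (X *m zminus aN gN).
Proof.
have -> : zminus aN gN = I *m zminus a g *m I^T.
  by rewrite /zminus mulmxBr mulmxBl -scalemxAr -scalemxAl.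
by move=> lr; apply: sub_pullback_graph => u; apply: sub_cconj_eigenspace_FH.
Qed.

Let sub_Ap v := sub_pullback_H 1 v.
Let sub_Am v := sub_pullback_H (-1) v.
Let sub_Bp v := sub_pullback_cH v (conjC1 C).
Let sub_Bm v := sub_pullback_cH v (conjCN1 C).

Let zplus_zminus : zplus aN gN - zminus aN gN = ('i *+ 2) *: gN.
Proof. by rewrite /zplus /zminus opprB addrC addrA addrNK -scalerDl mulr2n. Qed.

Let sub_span (v : 'rV_(k + k)) : (v <= Ap + Am + Bp + Bm)%MS ->
  exists X1 X2 X3 X4 : 'rV_k,
   [/\ X1 *m I *m f = 1 *: (X1 *m I), X2 *m I *m f = (-1) *: (X2 *m I),
       X3 *m I *m cconjmx f = 1 *: (X3 *m I), X4 *m I *m cconjmx f = (-1) *: (X4 *m I) &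
       v = row_mx ((X1 + X2) + (X3 + X4))
                  ((X1 + X2) *m zplus aN gN + (X3 + X4) *m zminus aN gN)].
Proof.
case/sub_addsmx_rowP => w [v4 [/sub_addsmx_rowP [w' [v3 [+ h3 ->]]] h4 ->]].
case/sub_addsmx_rowP => v1 [v2 [h1 h2 ->]].
case/sub_Ap: h1 => X1 [e1 ->]; case/sub_Am: h2 => X2 [e2 ->].
case/sub_Bp: h3 => X3 [e3 ->]; case/sub_Bm: h4 => X4 [e4 ->].
by exists X1, X2, X3, X4; split => //; rewrite !add_row_mx !mulmxDl !addrA.
Qed.

(* Decomposing (0, Y) forces Y = 2i X ι^*γ for some X, so ι^*γ is onto.
   Decomposing (X, X ι^*(ψ + iγ)) forces the conjugate parts to vanish, so
   X = X1 + X2 with X_j ι_* F = ±X_j ι_*, whence X ι_* F lies in T^cN. *)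
Lemma span_regular_invariant : (Ap + Am + Bp + Bm == 1%:M)%MS -> regular_invariant F J I.
Proof.
case/andP => _ full.
have span (v : 'rV_(k + k)) : (v <= Ap + Am + Bp + Bm)%MS by exact: submx_trans (submx1 v) full.
have gN_unit : gN \in unitmx.
  rewrite -row_full_unit -sub1mx; apply/row_subP => i.
  have [X1 [X2 [X3 [X4 [_ _ _ _ /eq_row_mx [e0 eY]]]]]] := sub_span (span (row_mx 0 (row i 1%:M))).
  have e34 : X3 + X4 = - (X1 + X2) by apply/eqP; rewrite -addr_eq0 addrC -e0.
  rewrite eY e34 mulNmx -mulmxN -mulmxDr zplus_zminus -scalemxAr scalemxAl.
  exact: submxMl.
split => //; apply/row_subP => j.
pose X : 'rV[C]_k := row j 1%:M.
have -> : row j (I *m f) = X *m I *m f by rewrite row_mul -[I in row j I]mul1mx row_mul.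
have [X1 [X2 [X3 [X4 [e1 e2 _ _ /eq_row_mx [eX eZ]]]]]] := sub_span (span (row_mx X (X *m zplus aN gN))).
have B0 : X3 + X4 = 0.
  set B := X3 + X4 in eX eZ *.
  have : B *m (zplus aN gN - zminus aN gN) = 0.
    rewrite mulmxBr; apply/eqP; rewrite subr_eq0; apply/eqP.
    by apply: (@addrI _ ((X1 + X2) *m zplus aN gN)); rewrite -mulmxDl -eX.
  rewrite zplus_zminus -scalemxAr => /eqP; rewrite scaler_eq0 (negPf (i2_neq0 C)) /= => /eqP h.
  by rewrite -[B]mulmx1 -(mulmxV gN_unit) mulmxA h mul0mx.
rewrite eX B0 addr0 mulmxDl mulmxDl e1 e2 scale1r scaleN1r -mulNmx -mulmxDl.
exact: submxMl.
Qed.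

Section RegularInvariant.
Variable fN : 'M[C]_k.
Hypotheses (gN_unit : gN \in unitmx) (I_fN : I *m f = fN *m I).

Local Notation FN := (triple_F aN gN fN).
Local Notation JN := (triple_J aN gN fN).

Let I_inj p (X Y : 'M[C]_(p, k)) : X *m I = Y *m I -> X = Y.
Proof. exact: row_free_inj. Qed.

Let I_cfN : I *m cconjmx f = cconjmx fN *m I.
Proof. by have /realmxP Ir := I_real; rewrite -{1}Ir -cconjmxM I_fN cconjmxM Ir. Qed.

Lemma pullback_para_triple : para_triple aN gN fN.
Proof.
have [[/realmxP ar aT /realmxP gr gT _] [ff fg]] := para_herm_triple FJ_para.
have /realmxP Ir := I_real.
split; split => //; try apply/realmxP.
- by rewrite !cconjmxM cconjmx_tr Ir ar.
- by rewrite !trmx_mul trmxK aT mulNmx mulmxN mulmxA.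
- by rewrite !cconjmxM cconjmx_tr Ir gr.
- by rewrite !trmx_mul trmxK gT mulmxA.
- by apply: I_inj; rewrite -mulmxA -I_fN mulmxA -I_fN -mulmxA ff mulmx1 mul1mx.
rewrite !mulmxA -I_fN -(mulmxA I f g) fg mulmxN mulNmx.
by rewrite -!mulmxA -trmx_mul I_fN trmx_mul.
Qed.

Let eigen_fN (l : C) (X : 'rV_k) : X *m I *m f = l *: (X *m I) <-> X *m fN = l *: X.
Proof. by rewrite -mulmxA I_fN mulmxA scalemxAl; split=> [/I_inj|->]. Qed.

Let eigen_cfN (l : C) (X : 'rV_k) :
  X *m I *m cconjmx f = l *: (X *m I) <-> X *m cconjmx fN = l *: X.
Proof. by rewrite -mulmxA I_cfN mulmxA scalemxAl; split=> [/I_inj|->]. Qed.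

Let row_HframeN (x y : 'rV_k) :
  row_mx x y *m Hframe aN gN = row_mx x (x *m zplus aN gN) + row_mx y (y *m zminus aN gN).
Proof. by rewrite /Hframe mul_row_block !mulmx1 add_row_mx. Qed.

Let eigenspace_FN (l : C) : l^* = l ->
  (eigenspace FN l ==
     pullback I (eigenspace F l :&: eigenspace (J *m F) 'i) +
     pullback I (cconjmx (eigenspace F l :&: eigenspace (J *m F) 'i)))%MS.
Proof.
move=> lr; apply: eqmx_row_subP => v.
rewrite (eigenspace_triple_F pullback_para_triple) sub_addsmx_rowP; split.
  case=> x [y [hx hy ->]]; exists (row_mx x (x *m zplus aN gN)), (row_mx y (y *m zminus aN gN)).
  rewrite row_HframeN; split=> //.
    by apply/sub_pullback_H; exists x; split=> //; apply/eigen_fN.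
  by apply/sub_pullback_cH => //; exists y; split=> //; apply/eigen_cfN.
case=> v1 [v2 [/sub_pullback_H [x [/eigen_fN hx ->]]]].
by case/(sub_pullback_cH _ lr) => y [/eigen_cfN hy ->] ->; exists x, y; rewrite row_HframeN.
Qed.

Lemma eigenspace_FN_pos : (eigenspace FN 1 == Ap + Bp)%MS.
Proof. exact: eigenspace_FN (conjC1 C). Qed.

Lemma eigenspace_FN_neg : (eigenspace FN (-1) == Am + Bm)%MS.
Proof. exact: eigenspace_FN (conjCN1 C). Qed.

Lemma eigenspace_JN : (eigenspace JN 'i == Ap + Bm)%MS.
Proof.
apply: eqmx_row_subP => v.
rewrite (eigenspace_triple_J pullback_para_triple) sub_addsmx_rowP; split.
  case=> x [y [hx hy ->]]; exists (row_mx x (x *m zplus aN gN)), (row_mx y (y *m zminus aN gN)).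
  rewrite row_HframeN; split=> //.
    by apply/sub_Ap; exists x; split=> //; apply/eigen_fN; rewrite scale1r.
  by apply/sub_Bm; exists y; split=> //; apply/eigen_cfN; rewrite scaleN1r.
case=> v1 [v2 [/sub_Ap [x [/eigen_fN hx ->]] /sub_Bm [y [/eigen_cfN hy ->]] ->]].
by exists x, y; rewrite row_HframeN hx hy scale1r scaleN1r.
Qed.

Let summands_sub :
  [/\ Ap <= Ap + Am + Bp + Bm, Am <= Ap + Am + Bp + Bm,
      Bp <= Ap + Am + Bp + Bm & Bm <= Ap + Am + Bp + Bm]%MS.
Proof.
have s1 := addsmxSl (Ap + Am + Bp)%MS Bm.
have s2 := submx_trans (addsmxSl (Ap + Am)%MS Bp) s1.
split; last exact: addsmxSr.
- exact: submx_trans (addsmxSl Ap Am) s2.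
- exact: submx_trans (addsmxSr Ap Am) s2.
- exact: submx_trans (addsmxSr (Ap + Am)%MS Bp) s1.
Qed.

Lemma span_full : (Ap + Am + Bp + Bm == 1%:M)%MS.
Proof.
apply/andP; split; first exact: submx1.
have [[_ _ FNFN _] _] := triple_para_herm pullback_para_triple.
apply/row_subP => i; apply: submx_trans (sub_eigenspace_pm1 (row i 1%:M) FNFN) _.
have [Ap_sub Am_sub Bp_sub Bm_sub] := summands_sub.
rewrite addsmx_sub; apply/andP; split.
  case/andP: eigenspace_FN_pos => e _; apply: submx_trans e _.
  by rewrite addsmx_sub Ap_sub Bp_sub.
case/andP: eigenspace_FN_neg => e _; apply: submx_trans e _.
by rewrite addsmx_sub Am_sub Bm_sub.
Qed.

(* The four pullbacks are graphs over the ±1-eigenspaces of fN and of conj fN,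
   whose dimensions add up to at most 2k. *)
Lemma span_direct : mxdirect (Ap + Am + Bp + Bm).
Proof.
rewrite mxdirectEgeq /=.
have full : (k + k <= \rank (Ap + Am + Bp + Bm))%N.
  by case/andP: span_full => _ /mxrankS; rewrite mxrank1.
have rAp : (\rank Ap <= \rank (eigenspace fN 1))%N.
  by apply: rank_graph_le => v /sub_Ap [X [/eigen_fN hX ->]]; exists X.
have rAm : (\rank Am <= \rank (eigenspace fN (-1)))%N.
  by apply: rank_graph_le => v /sub_Am [X [/eigen_fN hX ->]]; exists X.
have rBp : (\rank Bp <= \rank (eigenspace (cconjmx fN) 1))%N.
  by apply: rank_graph_le => v /sub_Bp [X [/eigen_cfN hX ->]]; exists X.
have rBm : (\rank Bm <= \rank (eigenspace (cconjmx fN) (-1)))%N.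
  by apply: rank_graph_le => v /sub_Bm [X [/eigen_cfN hX ->]]; exists X.
have := rank_eigenspace_pm1 fN; have := rank_eigenspace_pm1 (cconjmx fN).
lia.
Qed.

Lemma pullback_structure_unique (FN' JN' : 'M[C]_(k + k)) : gen_para_herm FN' JN' ->
  (eigenspace FN' 1 == Ap + Bp)%MS -> (eigenspace FN' (-1) == Am + Bm)%MS ->
  (eigenspace JN' 'i == Ap + Bm)%MS -> FN' = FN /\ JN' = JN.
Proof.
move=> [[_ JN'_real FF JJ] _] e1 e2 e3.
have [[_ JN_real _ _] _] := triple_para_herm pullback_para_triple.
split.
  apply: invol_eq_eigenspace FF _ _.
    by case/andP: e1 => s _; case/andP: eigenspace_FN_pos => _ s'; apply: submx_trans s s'.
  by case/andP: e2 => s _; case/andP: eigenspace_FN_neg => _ s'; apply: submx_trans s s'.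
apply: cpx_eq_eigenspace JJ JN'_real JN_real _.
by case/andP: e3 => s _; case/andP: eigenspace_JN => _ s'; apply: submx_trans s s'.
Qed.

End RegularInvariant.

End Submanifold.

Unset Implicit Arguments.

Theorem proposition4p1 (C : numClosedFieldType) (m k : nat)
  (F J : 'M[C]_(m + m)) (I : 'M[C]_(k, m)) :
  gen_para_herm F J -> I \is a realmx -> row_free I ->
  let Ap := pullback I (Hplus F J) in
  let Am := pullback I (Hminus F J) in
  let Bp := pullback I (cconjmx (Hplus F J)) in
  let Bm := pullback I (cconjmx (Hminus F J)) in
  let defines (FN JN : 'M[C]_(k + k)) :=
    [/\ gen_para_herm FN JN,
        (eigenspace FN 1 == Ap + Bp)%MS,
        (eigenspace FN (-1) == Am + Bm)%MS &
        (eigenspace JN 'i == Ap + Bm)%MS] in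
  (regular_invariant F J I <->
     [/\ mxdirect (Ap + Am + Bp + Bm),
         (Ap + Am + Bp + Bm == 1%:M)%MS &
         exists FN JN, defines FN JN])
  /\
  (regular_invariant F J I ->
     forall FN JN, defines FN JN ->
       [/\ gammaM FN JN = I *m gammaM F J *m I^T,
           psiM FN JN = I *m psiM F J *m I^T &
           I *m Fmx F J = Fmx FN JN *m I]).
Proof.
move=> FJ_para I_real I_free Ap Am Bp Bm defines.
split; first split.
- case=> gN_unit /submxP [fN I_fN].
  have triple := pullback_para_triple FJ_para I_real I_free gN_unit I_fN.
  split; [exact: span_direct I_fN | exact: span_full I_fN |].
  exists (triple_F (I *m psiM F J *m I^T) (I *m gammaM F J *m I^T) fN).
  exists (triple_J (I *m psiM F J *m I^T) (I *m gammaM F J *m I^T) fN).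
  split; first exact: triple_para_herm.
  + exact: eigenspace_FN_pos I_fN.
  + exact: eigenspace_FN_neg I_fN.
  + exact: eigenspace_JN I_fN.
- by case=> _ span _; apply: span_regular_invariant.
- case=> gN_unit /submxP [fN I_fN] FN JN [FJN_para e1 e2 e3].
  have triple := pullback_para_triple FJ_para I_real I_free gN_unit I_fN.
  have [-> ->] := pullback_structure_unique FJ_para I_real I_free gN_unit I_fN FJN_para e1 e2 e3.
  by rewrite gammaM_triple // psiM_triple // Fmx_triple.
Qed.
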